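(* Let $\sigma$ be an erasing $k$-block substitution with $w_\epsilon\ne 1^k$. Then $f_\sigma$ is continuous at every point of $$\mathcal C^\sigma=\mathbb I\setminus(\mathcal Q_2^0\cup\mathcal E^\sigma),$$ whose complement is countable, and consequently $f_\sigma$ is of Baire class 1. Moreover, $f_\sigma$ is left-continuous at every point of $\mathbb Q_2\setminus\{0\}$.
   Context: Notation: $\mathbb I=[0,1]$. $\mathbb Q_2$ is the set of dyadic rationals in $\mathbb I$, $\mathcal Q_2=\mathbb Q_2\setminus\{0,1\}$ and $\mathcal Q_2^0=\mathcal Q_2\cup\{0\}$. $\{0,1\}^*$ and $\{0,1\}^\omega$ denote finite and infinite binary words, and $\epsilon$ is the empty word. For a word $w$, set $0.w=\sum_i w_i2^{-i}$. For $x\in(0,1]$, $\widetilde x$ is the unique infinite binary expansion of $x$ not ending in $0^\infty$. Fix $k\ge2$. An erasing $k$-block substitution is a map $\sigma:\{0,1\}^k\to\{0,1\}^*$ with exactly one block $w_\epsilon$ such that $\sigma(w_\epsilon)=\epsilon$. It acts blockwise on infinite words and on finite words of length a multiple of $k$, by concatenating the images of consecutive $k$-blocks. The map $f_\sigma:\mathbb I\to\mathbb I$ is defined by $f_\sigma(x)=0.\sigma(\widetilde x)$ if $x\in(0,1]$ and $\widetilde x\ne w_\epsilon^\infty$, and $f_\sigma(x)=0$ if $x=0$ or $\widetilde x=w_\epsilon^\infty$. Define $\mathcal E^\sigma=\{x\in\mathbb I\cap\mathbb Q: x=0.vw_\epsilon^\infty \text{ for some } v\in\{0,1\}^{nk},\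 n\in\mathbb N_0\}$. *)

From Stdlib Require Import Reals Lra Lia List QArith Classical ClassicalEpsilon.
From Coquelicot Require Import Coquelicot.
Import ListNotations.
Open Scope R_scope.

(* Finite binary words: list bool; infinite binary words: nat -> bool,
   letter number i (0-indexed) carries weight 2^-(i+1). *)
Definition b2R (b : bool) : R := if b then 1 else 0.

Fixpoint fval (w : list bool) : R :=
  match w with
  | [] => 0
  | b :: w' => (b2R b + fval w') / 2
  end.

Definition ival (u : nat -> bool) : R :=
  Series (fun i => b2R (u i) / 2 ^ (S i)).

Definition is_bin_exp (x : R) (u : nat -> bool) : Prop :=
  is_series (fun i => b2R (u i) / 2 ^ (S i)) x.

Definition not_ending_in_0 (u : nat -> bool) : Prop :=
  forall N : nat, exists i : nat, (N <= i)%nat /\ u i = true.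

(* \widetilde x : the (unique, for x in (0,1]) infinite binary expansion
   of x not ending in 0^infinity *)
Definition tilde (x : R) : nat -> bool :=
  epsilon (inhabits (fun _ : nat => false))
    (fun u => is_bin_exp x u /\ not_ending_in_0 u).

Definition block (k : nat) (u : nat -> bool) (n : nat) : list bool :=
  map (fun j => u (n * k + j)%nat) (seq 0 k).

Definition sigma_prefix (k : nat) (sigma : list bool -> list bool)
    (u : nat -> bool) (n : nat) : list bool :=
  flat_map (fun m => sigma (block k u m)) (seq 0 n).

(* 0.sigma(u): value of the (possibly finite) concatenation of the block
   images, i.e. the limit of the values of its prefixes sigma(b_0...b_{n-1}) *)
Definition sigma_val (k : nat) (sigma : list bool -> list bool)
    (u : nat -> bool) : R :=
  real (Lim_seq (fun n => fval (sigma_prefix k sigma u n))).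

Definition v_winf (k : nat) (v w : list bool) (i : nat) : bool :=
  if Nat.ltb i (length v) then nth i v false
  else nth ((i - length v) mod k) w false.

Definition f_sigma (k : nat) (sigma : list bool -> list bool)
    (weps : list bool) (x : R) : R :=
  if excluded_middle_informative
       (x = 0 \/ (forall i, tilde x i = v_winf k [] weps i))
  then 0
  else sigma_val k sigma (tilde x).

Definition inI (x : R) : Prop := 0 <= x <= 1.

Definition dyadic (x : R) : Prop :=
  inI x /\ exists (m n : nat), x = INR m / 2 ^ n.

(* Q_2^0 = Q_2 \ {1} = (Q_2 \ {0,1}) \cup {0} *)
Definition dyadic0 (x : R) : Prop := dyadic x /\ x <> 1.

Definition E_sigma (k : nat) (weps : list bool) (x : R) : Prop :=
  inI x /\ (exists q : Q, x = Q2R q) /\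
  exists (v : list bool) (n : nat),
    length v = (n * k)%nat /\ x = ival (v_winf k v weps).

Definition C_sigma (k : nat) (weps : list bool) (x : R) : Prop :=
  inI x /\ ~ dyadic0 x /\ ~ E_sigma k weps x.

Definition continuous_at_in_I (f : R -> R) (x : R) : Prop :=
  forall eps : R, 0 < eps -> exists delta : R, 0 < delta /\
    forall y : R, inI y -> Rabs (y - x) < delta -> Rabs (f y - f x) < eps.

Definition left_continuous_at_in_I (f : R -> R) (x : R) : Prop :=
  forall eps : R, 0 < eps -> exists delta : R, 0 < delta /\
    forall y : R, inI y -> x - delta < y <= x -> Rabs (f y - f x) < eps.

Definition baire_class_1_on_I (f : R -> R) : Prop :=
  exists fn : nat -> R -> R,
    (forall n x, inI x -> continuous_at_in_I (fn n) x) /\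
    (forall x, inI x -> Un_cv (fun n => fn n x) (f x)).

Definition countable_set (A : R -> Prop) : Prop :=
  exists g : nat -> R, forall x, A x -> exists n, g n = x.

From Stdlib Require Import Reals Lra Lia ZArith List QArith Classical ClassicalEpsilon Cantor.
From Coquelicot Require Import Coquelicot.
Import ListNotations.
Open Scope R_scope.

(* For x in (0,1] the expansion x~ is read off the dyadic
      intervals (z/2^m, (z+1)/2^m] containing x ([dint], [tilde_digit]); such
      an interval contains a left neighbourhood of x, and a full neighbourhood
      unless x is a dyadic point of (0,1) ([dint_nbhd]).
   2. A general Baire-1 criterion ([baire_criterion]) for f : I -> [0,1] that
      is lower semicontinuous off the dyadic points and continuous there except
      at points of finite sets S n well separated from the dyadic points.
   3. Values of 0.sigma(u): the first n block images of x~ fix f_sigma up to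
      2^-(length of the image), so f_sigma is lower semicontinuous along
      dyadic intervals, and continuous where the images grow without bound;
      otherwise x~ ends in w_eps^oo.  Dyadic points end in 1^oo, never erased.
   4. Points with x~ = v w_eps^oo have an explicit rational value, separated
      from the dyadic points; they form the sets S n of the criterion.
   The four parts of the theorem then follow from these facts. *)

Lemma pow2_pos (j : nat) : 0 < 2 ^ j.
Proof. apply pow_lt; lra. Qed.

Lemma inv_pow2_small (eps : R) : 0 < eps ->
  exists N, forall n, (N <= n)%nat -> / 2 ^ n < eps.
Proof.
  intros He.
  destruct (pow_lt_1_zero (/ 2) ltac:(rewrite Rabs_pos_eq; lra) eps He) as [N HN].
  exists N; intros n Hn. specialize (HN n Hn).
  rewrite pow_inv, Rabs_pos_eq in HN; [exact HN|].
  left; apply Rinv_0_lt_compat, pow2_pos.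
Qed.

Fixpoint pw2 (j : nat) : Z := match j with O => 1%Z | S j => (2 * pw2 j)%Z end.

Lemma pw2_IZR (j : nat) : IZR (pw2 j) = 2 ^ j.
Proof.
  induction j as [|j IH]; [reflexivity|].
  change (pw2 (S j)) with (2 * pw2 j)%Z. rewrite mult_IZR, IH; reflexivity.
Qed.

Lemma pw2_pos (j : nat) : (0 < pw2 j)%Z.
Proof. induction j; [reflexivity|]. change (pw2 (S j)) with (2 * pw2 j)%Z. lia. Qed.

Definition b2Z (b : bool) : Z := if b then 1%Z else 0%Z.

Lemma b2R_IZR (b : bool) : b2R b = IZR (b2Z b).
Proof. destruct b; reflexivity. Qed.

(* [dint m x] is the integer z with z < 2^m x <= z + 1: x lies in the
   half-open dyadic interval (z/2^m, (z+1)/2^m]. *)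
Definition dint (m : nat) (x : R) : Z := (- up (- (2 ^ m * x)))%Z.

Lemma dint_spec (m : nat) (x : R) : IZR (dint m x) < 2 ^ m * x <= IZR (dint m x) + 1.
Proof. destruct (archimed (- (2 ^ m * x))). unfold dint; rewrite opp_IZR; lra. Qed.

Lemma dint_unique (m : nat) (x : R) (z : Z) :
  IZR z < 2 ^ m * x <= IZR z + 1 -> z = dint m x.
Proof.
  intros [H1 H2]. destruct (dint_spec m x) as [H3 H4].
  assert (z < dint m x + 1)%Z by (apply lt_IZR; rewrite plus_IZR; simpl; lra).
  assert (dint m x < z + 1)%Z by (apply lt_IZR; rewrite plus_IZR; simpl; lra).
  lia.
Qed.

Lemma dint_0 (x : R) : 0 < x <= 1 -> dint 0 x = 0%Z.
Proof. intros. symmetry; apply dint_unique. simpl. lra. Qed.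

Lemma dint_nonneg (m : nat) (x : R) : 0 < x -> (0 <= dint m x)%Z.
Proof.
  intros Hx. destruct (dint_spec m x).
  assert (0 < 2 ^ m * x) by (apply Rmult_lt_0_compat; [apply pow2_pos|lra]).
  assert (-1 < dint m x)%Z by (apply lt_IZR; simpl; lra). lia.
Qed.

(* The i-th binary digit of x: whether x lies in the upper half of its
   level-i dyadic interval. *)
Definition digit (x : R) (i : nat) : bool := Z.eqb (dint (S i) x) (2 * dint i x + 1).

Lemma dint_S (i : nat) (x : R) : dint (S i) x = (2 * dint i x + b2Z (digit x i))%Z.
Proof.
  destruct (dint_spec i x) as [H1 H2]. unfold digit.
  assert (E2 : 2 ^ S i * x = 2 * (2 ^ i * x)) by (simpl; ring).
  destruct (Rle_dec (2 ^ S i * x) (IZR (2 * dint i x) + 1)) as [H|H].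
  - assert (E : (2 * dint i x)%Z = dint (S i) x).
    { apply dint_unique. rewrite mult_IZR in *. split; lra. }
    rewrite <- E. replace (Z.eqb (2 * dint i x) (2 * dint i x + 1)) with false
      by (symmetry; apply Z.eqb_neq; lia). simpl; lia.
  - assert (E : (2 * dint i x + 1)%Z = dint (S i) x).
    { apply dint_unique. rewrite plus_IZR, mult_IZR in *. split; lra. }
    rewrite <- E, Z.eqb_refl. simpl; lia.
Qed.

Lemma dint_agree (x y : R) (m : nat) :
  dint m x = dint m y -> forall i, (i < m)%nat -> digit x i = digit y i.
Proof.
  intros E i Hi.
  assert (Hdown : forall d j, dint (j + d) x = dint (j + d) y -> dint j x = dint j y).
  { induction d as [|d IH]; intros j Ed; [rewrite Nat.add_0_r in Ed; exact Ed|].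
    apply IH. rewrite Nat.add_succ_r, !dint_S in Ed.
    destruct (digit x (j + d)), (digit y (j + d)); cbn [b2Z] in Ed; lia. }
  replace m with (S i + (m - S i))%nat in E by lia.
  apply Hdown in E. rewrite !dint_S in E.
  destruct (digit x i), (digit y i); cbn [b2Z] in E; auto; lia.
Qed.

Definition binZ (w : list bool) : Z := fold_left (fun a b => (2 * a + b2Z b)%Z) w 0%Z.

Lemma binZ_snoc (w : list bool) (b : bool) : binZ (w ++ [b]) = (2 * binZ w + b2Z b)%Z.
Proof. unfold binZ. rewrite fold_left_app. reflexivity. Qed.

Lemma binZ_bounds (w : list bool) : (0 <= binZ w < pw2 (length w))%Z.
Proof.
  induction w as [|b w IH] using rev_ind; [unfold binZ; simpl; lia|].
  rewrite binZ_snoc, length_app, Nat.add_1_r. change (pw2 (S (length w))) with (2 * pw2 (length w))%Z.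
  destruct b; cbn [b2Z]; lia.
Qed.

Lemma binZ_zeros (j : nat) : binZ (repeat false j) = 0%Z.
Proof.
  induction j as [|j IH]; [reflexivity|].
  change (repeat false (S j)) with (false :: repeat false j).
  rewrite repeat_cons, binZ_snoc, IH. reflexivity.
Qed.

Lemma dint_add (x : R) (m j : nat) :
  dint (m + j) x = (pw2 j * dint m x + binZ (map (digit x) (seq m j)))%Z.
Proof.
  induction j as [|j IH]. rewrite Nat.add_0_r. cbn [pw2 seq map]. unfold binZ; cbn [fold_left]. lia.
  rewrite Nat.add_succ_r, dint_S, IH, seq_S, map_app. simpl map. rewrite binZ_snoc.
  change (pw2 (S j)) with (2 * pw2 j)%Z. lia.
Qed.

Fixpoint psum (u : nat -> bool) (m : nat) : R :=
  match m with O => 0 | S m' => psum u m' + b2R (u m') / 2 ^ (S m') end.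
Fixpoint pnum (u : nat -> bool) (m : nat) : Z :=
  match m with O => 0%Z | S m' => (2 * pnum u m' + b2Z (u m'))%Z end.

Lemma psum_pnum (u : nat -> bool) (m : nat) : psum u m = IZR (pnum u m) / 2 ^ m.
Proof.
  induction m as [|m IH]; cbn [psum pnum]; [unfold Rdiv; simpl; rewrite Rinv_1; ring|].
  rewrite IH, plus_IZR, mult_IZR, <- b2R_IZR.
  assert (0 < 2 ^ m) by apply pow2_pos. simpl. field. lra.
Qed.

Lemma sum_f_R0_psum (u : nat -> bool) (n : nat) :
  sum_f_R0 (fun i => b2R (u i) / 2 ^ (S i)) n = psum u (S n).
Proof. induction n as [|n IH]; simpl in *; [lra|]. rewrite IH; reflexivity. Qed.

Lemma psum_tail_bounds (u : nat -> bool) (m j : nat) :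
  psum u m <= psum u (m + j) <= psum u m + / 2 ^ m - / 2 ^ (m + j).
Proof.
  induction j as [|j IH]; [rewrite Nat.add_0_r; lra|].
  rewrite Nat.add_succ_r. cbn [psum].
  assert (Hp : 0 < 2 ^ (m + j)) by apply pow2_pos.
  assert (E : / 2 ^ (m + j) - / 2 ^ S (m + j) = / 2 ^ S (m + j)) by (simpl; field; lra).
  assert (0 < / 2 ^ S (m + j)) by (apply Rinv_0_lt_compat, pow2_pos).
  unfold Rdiv. destruct (u (m + j)%nat); simpl b2R; lra.
Qed.

Lemma bin_exp_bounds (x : R) (u : nat -> bool) (N : nat) (a b : R) :
  is_bin_exp x u -> (forall n, (N <= n)%nat -> a <= psum u (S n) <= b) -> a <= x <= b.
Proof.
  intros He H. apply is_series_Reals in He.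
  split; apply Rnot_lt_le; intro Hc;
    [destruct (He (a - x)) as [M HM] | destruct (He (x - b)) as [M HM]]; try lra;
    specialize (HM (max M N) ltac:(lia)); specialize (H (max M N) ltac:(lia));
    rewrite sum_f_R0_psum in HM; unfold Rdist in HM;
    [rewrite Rabs_right in HM | rewrite Rabs_left1 in HM]; lra.
Qed.

(* A binary expansion of x not ending in 0^oo has as first m digits those
   of the level-m dyadic interval of x: such an expansion is unique. *)
Lemma bin_exp_pnum (x : R) (u : nat -> bool) :
  is_bin_exp x u -> not_ending_in_0 u -> forall m, pnum u m = dint m x.
Proof.
  intros He Hn m. apply dint_unique.
  destruct (Hn m) as [i [Hi Hui]].
  assert (Hpi : 0 < / 2 ^ S i) by (apply Rinv_0_lt_compat, pow2_pos).
  assert (Hx : psum u m + / 2 ^ S i <= x <= psum u m + / 2 ^ m).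
  { apply (bin_exp_bounds x u i); auto. intros n Hn'. split.
    - pose proof (psum_tail_bounds u (S i) (S n - S i)) as [H1 _].
      pose proof (psum_tail_bounds u m (i - m)) as [H2 _].
      replace (S i + (S n - S i))%nat with (S n) in H1 by lia.
      replace (m + (i - m))%nat with i in H2 by lia.
      change (psum u (S i)) with (psum u i + b2R (u i) / 2 ^ S i) in H1.
      rewrite Hui in H1. simpl b2R in H1. unfold Rdiv in H1. lra.
    - pose proof (psum_tail_bounds u m (S n - m)) as [_ H1].
      replace (m + (S n - m))%nat with (S n) in H1 by lia.
      assert (0 < / 2 ^ S n) by (apply Rinv_0_lt_compat, pow2_pos). lra. }
  rewrite psum_pnum in Hx.
  assert (Hp : 0 < 2 ^ m) by apply pow2_pos.
  assert (E1 : 2 ^ m * (IZR (pnum u m) / 2 ^ m + / 2 ^ m) = IZR (pnum u m) + 1) by (field; lra).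
  assert (E2 : 2 ^ m * (IZR (pnum u m) / 2 ^ m) = IZR (pnum u m)) by (field; lra).
  split.
  - rewrite <- E2. apply Rmult_lt_compat_l; lra.
  - rewrite <- E1. apply Rmult_le_compat_l; lra.
Qed.

Lemma pnum_digit (x : R) (m : nat) : 0 < x <= 1 -> pnum (digit x) m = dint m x.
Proof.
  intros Hx. induction m as [|m IH]; cbn [pnum]; [rewrite dint_0; auto|].
  rewrite dint_S, IH; reflexivity.
Qed.

Lemma digit_bin_exp (x : R) : 0 < x <= 1 -> is_bin_exp x (digit x).
Proof.
  intros Hx. unfold is_bin_exp. apply is_series_Reals. intros eps He.
  destruct (inv_pow2_small eps He) as [N HN]. exists N. intros n Hn.
  rewrite sum_f_R0_psum, psum_pnum, pnum_digit by auto. unfold Rdist.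
  destruct (dint_spec (S n) x) as [H1 H2].
  assert (Hp : 0 < 2 ^ S n) by apply pow2_pos.
  specialize (HN (S n) ltac:(lia)).
  assert (E : IZR (dint (S n) x) / 2 ^ S n - x = (IZR (dint (S n) x) - 2 ^ S n * x) * / 2 ^ S n)
    by (field; lra).
  rewrite E, Rabs_mult, Rabs_inv, (Rabs_right (2 ^ S n)) by lra.
  assert (Rabs (IZR (dint (S n) x) - 2 ^ S n * x) <= 1) by (apply Rabs_le; lra).
  assert (0 < / 2 ^ S n) by (apply Rinv_0_lt_compat; lra).
  nra.
Qed.

(* ... not ending in 0^oo, since x lies strictly above the left end of its
   dyadic intervals. *)
Lemma digit_not_ending_in_0 (x : R) : 0 < x -> not_ending_in_0 (digit x).
Proof.
  intros Hx N. apply NNPP. intro Hn.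
  assert (H : forall j, dint (N + j) x = (pw2 j * dint N x)%Z).
  { intros j. rewrite dint_add.
    replace (map (digit x) (seq N j)) with (repeat false j).
    - rewrite binZ_zeros. lia.
    - apply nth_ext with false false; rewrite ?repeat_length, ?length_map, ?length_seq; auto.
      intros i Hi.
      rewrite nth_repeat, (nth_indep _ false (digit x 0)) by (rewrite length_map, length_seq; auto).
      rewrite map_nth, seq_nth by auto.
      destruct (digit x (N + i)) eqn:E; auto. exfalso; apply Hn; exists (N + i)%nat; split; [lia|auto]. }
  destruct (dint_spec N x) as [H1 _].
  assert (Hd : 0 < 2 ^ N * x - IZR (dint N x)) by lra.
  destruct (inv_pow2_small _ Hd) as [j Hj]. specialize (Hj j (le_n _)).
  destruct (dint_spec (N + j) x) as [_ H3].
  rewrite H, mult_IZR, pw2_IZR, pow_add in H3.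
  assert (Hp : 0 < 2 ^ j) by apply pow2_pos.
  assert (2 ^ N * x - IZR (dint N x) <= / 2 ^ j).
  { apply (Rmult_le_reg_l (2 ^ j)); [lra|]. rewrite Rinv_r; lra. }
  lra.
Qed.

Lemma tilde_spec (x : R) : 0 < x <= 1 -> is_bin_exp x (tilde x) /\ not_ending_in_0 (tilde x).
Proof.
  intros Hx. unfold tilde. apply epsilon_spec. exists (digit x).
  split; [apply digit_bin_exp | apply digit_not_ending_in_0]; lra.
Qed.

Lemma tilde_digit (x : R) : 0 < x <= 1 -> forall i, tilde x i = digit x i.
Proof.
  intros Hx i. destruct (tilde_spec x Hx) as [H1 H2].
  pose proof (bin_exp_pnum x _ H1 H2 (S i)) as E. cbn [pnum] in E.
  rewrite bin_exp_pnum with (x := x), dint_S in E by auto.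
  destruct (tilde x i), (digit x i); simpl in E; auto; lia.
Qed.

Lemma dint_left_nbhd (x : R) (m : nat) : 0 < x <= 1 -> exists d, 0 < d /\
  forall y, x - d < y <= x -> 0 < y <= 1 /\ dint m y = dint m x.
Proof.
  intros Hx. destruct (dint_spec m x) as [H1 H2].
  assert (Hp : 0 < 2 ^ m) by apply pow2_pos.
  assert (H0 : 0 <= IZR (dint m x)) by (apply IZR_le, dint_nonneg; lra).
  assert (Hl : IZR (dint m x) / 2 ^ m < x).
  { apply (Rmult_lt_reg_l (2 ^ m)); auto.
    replace (2 ^ m * (IZR (dint m x) / 2 ^ m)) with (IZR (dint m x)) by (field; lra). lra. }
  exists (x - IZR (dint m x) / 2 ^ m). split; [lra|]. intros y Hy.
  assert (0 <= IZR (dint m x) / 2 ^ m) by (apply Rmult_le_pos; [lra|left; apply Rinv_0_lt_compat; lra]).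
  split; [lra|]. symmetry; apply dint_unique. split.
  - replace (IZR (dint m x)) with (2 ^ m * (IZR (dint m x) / 2 ^ m)) by (field; lra).
    apply Rmult_lt_compat_l; lra.
  - assert (2 ^ m * y <= 2 ^ m * x) by (apply Rmult_le_compat_l; lra). lra.
Qed.

Lemma dint_nbhd (x : R) (m : nat) : 0 < x <= 1 -> (x = 1 \/ ~ dyadic x) -> exists d, 0 < d /\
  forall y, inI y -> Rabs (y - x) < d -> 0 < y <= 1 /\ dint m y = dint m x.
Proof.
  intros Hx Hnd. destruct (dint_left_nbhd x m Hx) as [d1 [Hd1 H1]].
  destruct Hnd as [E|Hnd].
  { exists d1. split; auto. intros y Hy Hyx. apply H1. unfold inI in Hy.
    apply Rabs_def2 in Hyx. lra. }
  destruct (dint_spec m x) as [A1 A2].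
  assert (Hp : 0 < 2 ^ m) by apply pow2_pos.
  assert (A3 : 2 ^ m * x < IZR (dint m x) + 1).
  { destruct A2 as [A2|A2]; auto. exfalso. apply Hnd. split; [unfold inI; lra|].
    exists (Z.to_nat (dint m x + 1)), m.
    pose proof (dint_nonneg m x ltac:(lra)).
    rewrite INR_IZR_INZ, Z2Nat.id, plus_IZR by lia. simpl IZR. rewrite <- A2. field. lra. }
  set (d2 := (IZR (dint m x) + 1) / 2 ^ m - x).
  assert (Hd2 : x < (IZR (dint m x) + 1) / 2 ^ m).
  { apply (Rmult_lt_reg_l (2 ^ m)); auto.
    replace (2 ^ m * ((IZR (dint m x) + 1) / 2 ^ m)) with (IZR (dint m x) + 1) by (field; lra). lra. }
  exists (Rmin d1 d2). split; [apply Rmin_pos; unfold d2; lra|].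
  intros y Hy Hyx. apply Rabs_def2 in Hyx. destruct Hyx as [Ha Hb].
  pose proof (Rmin_l d1 d2). pose proof (Rmin_r d1 d2).
  destruct (Rle_dec y x) as [Hle|Hgt]; [apply H1; lra|].
  split; [unfold inI in Hy; lra|].
  symmetry; apply dint_unique. split.
  - assert (2 ^ m * x < 2 ^ m * y) by (apply Rmult_lt_compat_l; lra). lra.
  - assert (y < (IZR (dint m x) + 1) / 2 ^ m) by (unfold d2 in *; lra).
    assert (2 ^ m * y < 2 ^ m * ((IZR (dint m x) + 1) / 2 ^ m)) by (apply Rmult_lt_compat_l; lra).
    replace (2 ^ m * ((IZR (dint m x) + 1) / 2 ^ m)) with (IZR (dint m x) + 1) in H3 by (field; lra). lra.
Qed.

Lemma digit_dyadic (x : R) (a L : nat) : 0 < x -> x = INR a / 2 ^ L ->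
  forall i, (L <= i)%nat -> digit x i = true.
Proof.
  intros Hx Ex i Hi.
  assert (Hint : forall j, (L <= j)%nat -> 2 ^ j * x = IZR (Z.of_nat a * pw2 (j - L))).
  { intros j Hj. rewrite mult_IZR, pw2_IZR, <- INR_IZR_INZ, Ex.
    replace j with (L + (j - L))%nat at 1 by lia. rewrite pow_add.
    assert (0 < 2 ^ L) by apply pow2_pos. field. lra. }
  assert (E1 : dint i x = (Z.of_nat a * pw2 (i - L) - 1)%Z).
  { symmetry; apply dint_unique. rewrite Hint by lia. rewrite minus_IZR. simpl. lra. }
  assert (E2 : dint (S i) x = (Z.of_nat a * pw2 (S i - L) - 1)%Z).
  { symmetry; apply dint_unique. rewrite Hint by lia. rewrite minus_IZR. simpl. lra. }
  replace (S i - L)%nat with (S (i - L)) in E2 by lia.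
  change (pw2 (S (i - L))) with (2 * pw2 (i - L))%Z in E2.
  pose proof (dint_S i x) as H. rewrite E1, E2 in H.
  destruct (digit x i); cbn [b2Z] in H; auto. lia.
Qed.

Lemma continuous_in_I (g : R -> R) (x : R) : continuous g x -> continuous_at_in_I g x.
Proof.
  intros H e He. destruct (H _ (locally_ball (g x) (mkposreal e He))) as [d Hd].
  exists d. split; [apply cond_pos|]. intros y _ Hy. exact (Hd y Hy).
Qed.

(* min(g, h) = (g + h - |g - h|)/2 is continuous with g and h. *)
Lemma continuous_Rmin (g h : R -> R) (x : R) :
  continuous g x -> continuous h x -> continuous (fun y => Rmin (g y) (h y)) x.
Proof.
  intros Hg Hh. apply (continuous_ext (fun y => (g y + h y - Rabs (g y - h y)) * / 2)).
  { intros y. unfold Rmin. destruct Rle_dec; [rewrite Rabs_left1|rewrite Rabs_right]; lra. }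
  apply (continuous_mult _ (fun _ => / 2)); [|apply continuous_const].
  apply (continuous_minus (fun y => g y + h y)); [apply (continuous_plus g h); auto|].
  apply continuous_Rabs_comp, (continuous_minus g h); auto.
Qed.

Lemma continuous_sum (a : nat -> R -> R) (x : R) (N : nat) :
  (forall j, (j <= N)%nat -> continuous (a j) x) ->
  continuous (fun y => sum_f_R0 (fun j => a j y) N) x.
Proof.
  induction N as [|N IH]; intros H; simpl; [apply H; lia|].
  apply (continuous_plus (fun y => sum_f_R0 (fun j => a j y) N) (a (S N))); [apply IH; auto|apply H; lia].
Qed.

Definition hat (n j : nat) (x : R) : R := Rmax 0 (1 - Rabs (2 ^ n * x - INR j)).

Lemma hat_nonneg (n j : nat) (x : R) : 0 <= hat n j x.
Proof. apply Rmax_l. Qed.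

Lemma hat_pos (n j : nat) (x : R) : 0 < hat n j x -> Rabs (2 ^ n * x - INR j) < 1.
Proof. unfold hat, Rmax. destruct Rle_dec; lra. Qed.

Lemma hat_pos_close (n j : nat) (x : R) : 0 < hat n j x -> Rabs (INR j / 2 ^ n - x) < / 2 ^ n.
Proof.
  intros H%hat_pos. pose proof (pow2_pos n).
  replace (INR j / 2 ^ n - x) with (- (2 ^ n * x - INR j) * / 2 ^ n) by (field; lra).
  rewrite Rabs_mult, Rabs_Ropp, Rabs_inv, (Rabs_right (2 ^ n)) by lra.
  rewrite <- (Rmult_1_l (/ 2 ^ n)) at 2. apply Rmult_lt_compat_r; [apply Rinv_0_lt_compat|]; lra.
Qed.

(* Hats are continuous, as max(t, 0) = (t + |t|)/2. *)
Lemma hat_continuous (n j : nat) (x : R) : continuous (hat n j) x.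
Proof.
  set (t y := 1 - Rabs (2 ^ n * y - INR j)).
  apply (continuous_ext (fun y => (t y + Rabs (t y)) * / 2)).
  { intros y. unfold hat. fold (t y). unfold Rmax.
    destruct Rle_dec; [rewrite Rabs_right|rewrite Rabs_left]; lra. }
  assert (Ht : continuous t x).
  { apply (continuous_minus (fun _ => 1)); [apply continuous_const|].
    apply continuous_Rabs_comp, (continuous_minus (fun y => 2 ^ n * y)); [|apply continuous_const].
    apply (continuous_mult (fun _ => 2 ^ n)); [apply continuous_const|apply continuous_id]. }
  apply (continuous_mult _ (fun _ => / 2)); [|apply continuous_const].
  apply (continuous_plus t); [exact Ht|apply continuous_Rabs_comp, Ht].
Qed.

Lemma hat_sum_pos (n : nat) (x : R) : inI x -> 0 < sum_f_R0 (fun j => hat n j x) (2 ^ n)%nat.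
Proof.
  intros Hx. set (r := 2 ^ n * x). pose proof (pow2_pos n).
  assert (Hr : 0 <= r <= 2 ^ n) by (unfold r, inI in *; split; nra).
  destruct (archimed r) as [A1 A2].
  assert (Hz : (0 <= up r - 1)%Z) by (assert (0 < up r)%Z by (apply lt_IZR; simpl; lra); lia).
  set (j0 := Z.to_nat (up r - 1)).
  assert (Hj0 : INR j0 = IZR (up r) - 1) by (unfold j0; rewrite INR_IZR_INZ, Z2Nat.id, minus_IZR; auto).
  assert (Hpos : 0 < hat n j0 x).
  { unfold hat. fold r. rewrite Hj0, Rabs_right by lra. eapply Rlt_le_trans; [|apply Rmax_r]. lra. }
  assert (Hj : (j0 <= 2 ^ n)%nat).
  { apply INR_le. rewrite pow_INR, Hj0. simpl INR. replace (1 + 1) with 2 by ring. lra. }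
  eapply Rlt_le_trans; [apply Hpos|].
  clear -Hj. induction (2 ^ n)%nat as [|N IH]; simpl.
  - replace j0 with 0%nat by lia. lra.
  - pose proof (hat_nonneg n (S N) x).
    destruct (Nat.eq_dec j0 (S N)) as [->|E]; [|specialize (IH ltac:(lia))];
      [assert (0 <= sum_f_R0 (fun j => hat n j x) N) by
         (apply cond_pos_sum; intros; apply hat_nonneg)|]; lra.
Qed.

Lemma node_in_I (n j : nat) : (j <= 2 ^ n)%nat -> inI (INR j / 2 ^ n).
Proof.
  intros Hj. pose proof (pow2_pos n). apply le_INR in Hj.
  rewrite pow_INR in Hj. simpl INR in Hj. replace (1 + 1) with 2 in Hj by ring.
  pose proof (pos_INR j). split.
  - apply Rmult_le_pos; [lra|left; apply Rinv_0_lt_compat; lra].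
  - apply (Rmult_le_reg_r (2 ^ n)); auto. unfold Rdiv. rewrite Rmult_assoc, Rinv_l; lra.
Qed.

(* A general criterion for Baire class 1.  A function f : I -> [0,1] that is
   lower semicontinuous off the dyadic points, and continuous there except at
   points that eventually belong to finite sets S n lying at distance at least
   1 / s n (where s n >= 2^n) from the dyadic points of level n, is the
   pointwise limit of the continuous functions min(P_n, Q_n): P_n
   interpolates f between the nodes j/2^n by hat functions, Q_n is the lower
   envelope of the cones of slope s n with apexes (c, f c), c in S n. *)
Section BaireCriterion.

Variable f : R -> R.
Variable S : nat -> list R.
Variable s : nat -> R.

Definition interp (n : nat) (x : R) : R :=
  sum_f_R0 (fun j => f (INR j / 2 ^ n) * hat n j x) (2 ^ n)%nat /
  sum_f_R0 (fun j => hat n j x) (2 ^ n)%nat.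

(* Q_n: the lower envelope of the cones of slope s n with apexes (c, f c),
   c in S n (capped at 2, above the range of f). *)
Definition cone_env (n : nat) (x : R) : R :=
  fold_right (fun c acc => Rmin acc (f c + s n * Rabs (x - c))) 2 (S n).

Definition baire_approx (n : nat) (x : R) : R := Rmin (interp n x) (cone_env n x).

Lemma interp_continuous (n : nat) (x : R) : inI x -> continuous (interp n) x.
Proof.
  intros Hx. unfold interp. pose proof (hat_sum_pos n x Hx).
  apply (continuous_mult _ (fun y => / sum_f_R0 (fun j => hat n j y) (2 ^ n)%nat)).
  - apply (continuous_sum (fun j y => f (INR j / 2 ^ n) * hat n j y)). intros j _.
    apply (continuous_mult (fun _ => f (INR j / 2 ^ n))); [apply continuous_const|apply hat_continuous].
  - apply continuous_Rinv_comp; [|lra].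
    apply (continuous_sum (fun j y => hat n j y)). intros; apply hat_continuous.
Qed.

Lemma interp_bounds (n : nat) (x lo hi : R) : inI x ->
  (forall j, (j <= 2 ^ n)%nat -> 0 < hat n j x -> lo <= f (INR j / 2 ^ n) <= hi) ->
  lo <= interp n x <= hi.
Proof.
  intros Hx H. pose proof (hat_sum_pos n x Hx) as Hd. unfold interp.
  set (D := sum_f_R0 (fun j => hat n j x) (2 ^ n)%nat) in *.
  set (Num := sum_f_R0 (fun j => f (INR j / 2 ^ n) * hat n j x) (2 ^ n)%nat).
  assert (Hterm : forall j, (j <= 2 ^ n)%nat ->
    hat n j x * lo <= f (INR j / 2 ^ n) * hat n j x <= hat n j x * hi).
  { intros j Hj. destruct (hat_nonneg n j x) as [Hp|Hz]; [|rewrite <- Hz; lra].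
    specialize (H j Hj Hp). rewrite !(Rmult_comm (hat n j x)).
    split; apply Rmult_le_compat_r; lra. }
  assert (Hlo : lo * D <= Num).
  { unfold D, Num. rewrite scal_sum. apply sum_Rle. intros j Hj. apply Hterm, Hj. }
  assert (Hhi : Num <= hi * D).
  { unfold D, Num. rewrite scal_sum. apply sum_Rle. intros j Hj. apply Hterm, Hj. }
  split; apply (Rmult_le_reg_r D); auto; unfold Rdiv; rewrite Rmult_assoc, Rinv_l; lra.
Qed.

Lemma cone_env_continuous (n : nat) (x : R) : continuous (cone_env n) x.
Proof.
  unfold cone_env. induction (S n) as [|c l IH]; simpl; [apply continuous_const|].
  apply (continuous_Rmin (fun y => fold_right _ 2 l)); [exact IH|].
  apply (continuous_plus (fun _ => f c)); [apply continuous_const|].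
  apply (continuous_mult (fun _ => s n)); [apply continuous_const|].
  apply continuous_Rabs_comp, (continuous_minus (fun y => y) (fun _ => c));
    [apply continuous_id|apply continuous_const].
Qed.

Lemma cone_env_le (n : nat) (c x : R) : In c (S n) -> cone_env n x <= f c + s n * Rabs (x - c).
Proof.
  unfold cone_env. induction (S n) as [|c' l IH]; simpl; [tauto|].
  intros [<-|H]; [apply Rmin_r|]. eapply Rle_trans; [apply Rmin_l|auto].
Qed.

Lemma cone_env_ge (n : nat) (x lo : R) : lo <= 2 ->
  (forall c, In c (S n) -> lo <= f c + s n * Rabs (x - c)) -> lo <= cone_env n x.
Proof.
  unfold cone_env. induction (S n) as [|c l IH]; simpl; intros H1 H2; auto.
  apply Rmin_glb; auto.
Qed.

Lemma baire_approx_continuous (n : nat) (x : R) : inI x -> continuous_at_in_I (baire_approx n) x.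
Proof.
  intros Hx. apply continuous_in_I, (continuous_Rmin (interp n) (cone_env n)).
  - apply interp_continuous, Hx.
  - apply cone_env_continuous.
Qed.

Hypothesis f_range : forall x, inI x -> 0 <= f x <= 1.
Hypothesis S_in_I : forall n c, In c (S n) -> inI c.
Hypothesis s_large : forall n, 2 ^ n <= s n.
Hypothesis S_sep : forall n a L c, (L <= n)%nat -> In c (S n) -> c <> INR a / 2 ^ L ->
  1 <= s n * Rabs (c - INR a / 2 ^ L).
Hypothesis f_lsc : forall x, inI x -> ~ dyadic x -> forall e, 0 < e -> exists d, 0 < d /\
  forall y, inI y -> Rabs (y - x) < d -> f x - e <= f y.
Hypothesis f_cont_or_center : forall x, inI x -> ~ dyadic x ->
  continuous_at_in_I f x \/ exists N, forall n, (N <= n)%nat -> In x (S n).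

Lemma cone_lower (n : nat) (x c : R) : inI x -> In c (S n) -> 1 <= s n * Rabs (x - c) ->
  f x <= f c + s n * Rabs (x - c).
Proof. intros Hx Hc H. pose proof (f_range x Hx). pose proof (f_range c (S_in_I n c Hc)). lra. Qed.

Lemma baire_approx_dyadic (x : R) (a L n : nat) : inI x -> x = INR a / 2 ^ L -> (L <= n)%nat ->
  baire_approx n x = f x.
Proof.
  intros Hx Ex Hn.
  assert (Hint : 2 ^ n * x = INR (a * 2 ^ (n - L))).
  { rewrite mult_INR, pow_INR, Ex. simpl INR. replace (1 + 1) with 2 by ring.
    replace n with (L + (n - L))%nat at 1 by lia. rewrite pow_add. pose proof (pow2_pos L). field. lra. }
  assert (Hnode : forall j, 0 < hat n j x -> INR j / 2 ^ n = x).
  { intros j Hh%hat_pos. rewrite Hint in Hh.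
    assert (Ej : j = (a * 2 ^ (n - L))%nat).
    { apply Rabs_def2 in Hh. destruct (Nat.lt_total j (a * 2 ^ (n - L))) as [C|[C|C]]; auto;
        apply le_INR in C; rewrite S_INR in C; lra. }
    rewrite Ej, <- Hint. pose proof (pow2_pos n). field. lra. }
  assert (HP : interp n x = f x).
  { assert (H : f x <= interp n x <= f x).
    { apply interp_bounds; auto. intros j _ Hh. rewrite Hnode; auto; lra. }
    lra. }
  assert (HQ : f x <= cone_env n x).
  { apply cone_env_ge; [pose proof (f_range x Hx); lra|]. intros c Hc.
    destruct (Req_dec c x) as [->|Hne].
    - rewrite Rminus_diag, Rabs_R0, Rmult_0_r. lra.
    - apply cone_lower; auto. rewrite Rabs_minus_sym, Ex.
      apply S_sep; auto. rewrite <- Ex; exact Hne. }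
  unfold baire_approx. rewrite HP. apply Rmin_left, HQ.
Qed.

(* Off the dyadic points, lower semicontinuity gives the lower bound ... *)
Lemma baire_approx_lower (x e : R) : inI x -> ~ dyadic x -> 0 < e ->
  exists N, forall n, (N <= n)%nat -> f x - e <= baire_approx n x.
Proof.
  intros Hx Hnd He. destruct (f_lsc x Hx Hnd e He) as [d [Hd Hlsc]].
  destruct (inv_pow2_small d Hd) as [N HN]. exists N. intros n Hn.
  specialize (HN n Hn). pose proof (pow2_pos n). pose proof (f_range x Hx).
  apply Rmin_glb.
  - refine (proj1 (interp_bounds n x (f x - e) 1 Hx _)). intros j Hj Hh.
    split; [|pose proof (f_range _ (node_in_I n j Hj)); lra].
    apply Hlsc; [apply node_in_I, Hj|]. pose proof (hat_pos_close n j x Hh). lra.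
  - apply cone_env_ge; [lra|]. intros c Hc.
    destruct (Rlt_dec (Rabs (c - x)) d) as [Hcl|Hfar].
    + assert (0 <= s n * Rabs (x - c))
        by (apply Rmult_le_pos; [pose proof (s_large n); lra|apply Rabs_pos]).
      specialize (Hlsc c (S_in_I n c Hc) Hcl). lra.
    + assert (Hsteep : 1 <= s n * Rabs (x - c)).
      { rewrite Rabs_minus_sym. apply Rle_trans with (2 ^ n * d).
        - apply (Rmult_le_reg_l (/ 2 ^ n)); [apply Rinv_0_lt_compat; lra|].
          rewrite <- Rmult_assoc, Rinv_l, Rmult_1_l, Rmult_1_r; lra.
        - pose proof (s_large n). apply Rmult_le_compat; lra. }
      pose proof (cone_lower n x c Hx Hc Hsteep). lra.
Qed.

(* ... and continuity, or membership in S n, the upper bound. *)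
Lemma baire_approx_upper (x e : R) : inI x -> ~ dyadic x -> 0 < e ->
  exists N, forall n, (N <= n)%nat -> baire_approx n x <= f x + e.
Proof.
  intros Hx Hnd He. destruct (f_cont_or_center x Hx Hnd) as [Hc|[N HN]].
  - destruct (Hc e He) as [d [Hd Hcd]]. destruct (inv_pow2_small d Hd) as [N HN].
    exists N. intros n Hn. eapply Rle_trans; [apply Rmin_l|].
    refine (proj2 (interp_bounds n x 0 (f x + e) Hx _)). intros j Hj Hh.
    split; [pose proof (f_range _ (node_in_I n j Hj)); lra|].
    assert (Hnear : Rabs (f (INR j / 2 ^ n) - f x) < e).
    { apply Hcd; [apply node_in_I, Hj|]. pose proof (hat_pos_close n j x Hh). specialize (HN n Hn). lra. }
    apply Rabs_def2 in Hnear. lra.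
  - exists N. intros n Hn. eapply Rle_trans; [apply Rmin_r|].
    eapply Rle_trans; [apply (cone_env_le n x x), HN, Hn|].
    rewrite Rminus_diag, Rabs_R0, Rmult_0_r. lra.
Qed.

Theorem baire_criterion : baire_class_1_on_I f.
Proof.
  exists baire_approx. split; [apply baire_approx_continuous|].
  intros x Hx. destruct (classic (dyadic x)) as [[_ [a [L E]]]|Hnd].
  - intros e He. exists L. intros n Hn. rewrite (baire_approx_dyadic x a L n Hx E Hn).
    unfold Rdist. rewrite Rminus_diag, Rabs_R0; auto.
  - intros e He. destruct (baire_approx_lower x (e / 2) Hx Hnd ltac:(lra)) as [N1 H1].
    destruct (baire_approx_upper x (e / 2) Hx Hnd ltac:(lra)) as [N2 H2].
    exists (max N1 N2). intros n Hn. specialize (H1 n ltac:(lia)). specialize (H2 n ltac:(lia)).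
    unfold Rdist. apply Rabs_def1; lra.
Qed.

End BaireCriterion.

Lemma fval_app (a b : list bool) : fval (a ++ b) = fval a + fval b / 2 ^ length a.
Proof. induction a as [|x a IH]; simpl; [field|]. rewrite IH. field. apply pow_nonzero; lra. Qed.

Lemma fval_bounds (w : list bool) : 0 <= fval w <= 1.
Proof. induction w as [|b w IH]; simpl; [lra|]. destruct b; simpl; lra. Qed.

Lemma block_length (k : nat) (u : nat -> bool) (n : nat) : length (block k u n) = k.
Proof. unfold block. rewrite length_map, length_seq. reflexivity. Qed.

Lemma block_nth (k : nat) (u : nat -> bool) (n j : nat) : (j < k)%nat ->
  nth j (block k u n) false = u (n * k + j)%nat.
Proof.
  intros Hj. unfold block.
  rewrite (nth_indep _ false (u (n * k + 0)%nat)) by (rewrite length_map, length_seq; auto).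
  rewrite (map_nth (fun j => u (n * k + j)%nat)), seq_nth by auto. reflexivity.
Qed.

Section SigmaValue.

Variables (k : nat) (sigma : list bool -> list bool).

Lemma sigma_prefix_S (u : nat -> bool) (n : nat) :
  sigma_prefix k sigma u (S n) = sigma_prefix k sigma u n ++ sigma (block k u n).
Proof. unfold sigma_prefix. rewrite seq_S, flat_map_app. simpl. rewrite app_nil_r. reflexivity. Qed.

Lemma sigma_prefix_add (u : nat -> bool) (n j : nat) :
  exists r, sigma_prefix k sigma u (n + j) = sigma_prefix k sigma u n ++ r.
Proof.
  induction j as [|j [r Hr]]; [exists []; rewrite Nat.add_0_r, app_nil_r; auto|].
  exists (r ++ sigma (block k u (n + j))).
  rewrite Nat.add_succ_r, sigma_prefix_S, Hr, app_assoc. reflexivity.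
Qed.

Lemma sigma_prefix_ext (u u' : nat -> bool) (n : nat) :
  (forall i, (i < n * k)%nat -> u i = u' i) -> sigma_prefix k sigma u n = sigma_prefix k sigma u' n.
Proof.
  induction n as [|n IH]; intros H; [reflexivity|].
  rewrite !sigma_prefix_S, IH by (intros i Hi; apply H; simpl; nia). do 2 f_equal.
  unfold block. apply map_ext_in. intros j Hj%in_seq. apply H. simpl. nia.
Qed.

Lemma prefix_value_bounds (u : nat -> bool) (n j : nat) :
  let w := sigma_prefix k sigma u n in
  fval w <= fval (sigma_prefix k sigma u (n + j)) <= fval w + / 2 ^ length w.
Proof.
  intros w. destruct (sigma_prefix_add u n j) as [r Hr]. rewrite Hr, fval_app. fold w.
  pose proof (fval_bounds r). pose proof (pow2_pos (length w)).
  assert (0 < / 2 ^ length w) by (apply Rinv_0_lt_compat; lra).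
  unfold Rdiv. split; [|rewrite <- (Rmult_1_l (/ 2 ^ length w)) at 2]; nra.
Qed.

Lemma sigma_val_lim (u : nat -> bool) :
  is_lim_seq (fun n => fval (sigma_prefix k sigma u n)) (sigma_val k sigma u).
Proof.
  set (V := fun n => fval (sigma_prefix k sigma u n)).
  assert (Hincr : forall n, V n <= V (S n)).
  { intros n. rewrite <- Nat.add_1_r. apply prefix_value_bounds. }
  pose proof (Lim_seq_correct V (ex_lim_seq_incr _ Hincr)) as H.
  unfold sigma_val. fold V. destruct (Lim_seq V) as [l| |] eqn:E; [exact H| |]; exfalso.
  - assert (Rbar_le p_infty 1) as C; [|exact C].
    apply (is_lim_seq_le V (fun _ => 1)); auto; [intros; apply fval_bounds|apply is_lim_seq_const].
  - assert (Rbar_le 0 m_infty) as C; [|exact C].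
    apply (is_lim_seq_le (fun _ => 0) V); auto; [intros; apply fval_bounds|apply is_lim_seq_const].
Qed.

Lemma sigma_val_bounds (u : nat -> bool) (n : nat) :
  let w := sigma_prefix k sigma u n in
  fval w <= sigma_val k sigma u <= fval w + / 2 ^ length w.
Proof.
  intros w. pose proof (sigma_val_lim u) as Hl.
  assert (Hev : forall c, (forall j, c (fval (sigma_prefix k sigma u (n + j)))) ->
    exists N, forall m, (N <= m)%nat -> c (fval (sigma_prefix k sigma u m))).
  { intros c Hc. exists n. intros m Hm. replace m with (n + (m - n))%nat by lia. apply Hc. }
  split.
  - refine (is_lim_seq_le_loc (fun _ => fval w) _ (fval w) _ _ _ Hl); [|apply is_lim_seq_const].
    apply (Hev (fun v => fval w <= v)). intros j. apply prefix_value_bounds.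
  - refine (is_lim_seq_le_loc _ (fun _ => fval w + / 2 ^ length w) _ (fval w + / 2 ^ length w) _ Hl _);
      [|apply is_lim_seq_const].
    apply (Hev (fun v => v <= fval w + / 2 ^ length w)). intros j. apply prefix_value_bounds.
Qed.

End SigmaValue.

Section Substitution.

Variables (k : nat) (sigma : list bool -> list bool) (weps : list bool).
Hypothesis hk : (2 <= k)%nat.
Hypothesis hlen : length weps = k.
Hypothesis heps : sigma weps = [].
Hypothesis huniq : forall w : list bool, length w = k -> sigma w = [] -> w = weps.

Local Notation F := (f_sigma k sigma weps).

Lemma v_winf_block (v : list bool) (n : nat) : length v = (n * k)%nat ->
  forall m, (n <= m)%nat -> block k (v_winf k v weps) m = weps.
Proof.
  intros Hv m Hm. apply nth_ext with false false; [rewrite block_length; auto|].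
  intros j Hj. rewrite block_length in Hj. rewrite block_nth by auto. unfold v_winf.
  replace (Nat.ltb (m * k + j) (length v)) with false by (symmetry; apply Nat.ltb_ge; nia).
  replace (m * k + j - length v)%nat with (j + (m - n) * k)%nat by nia.
  rewrite Nat.Div0.mod_add, Nat.mod_small by lia. reflexivity.
Qed.

(* Only the erased word w_eps^oo has an empty image, so the special case in
   the definition of f_sigma is harmless: f_sigma x = 0.sigma(x~) for x <> 0. *)
Lemma f_sigma_eq (x : R) : x <> 0 -> F x = sigma_val k sigma (tilde x).
Proof.
  intros Hx. unfold f_sigma. destruct excluded_middle_informative as [[H|H]|H]; auto; [contradiction|].
  unfold sigma_val. rewrite (Lim_seq_ext _ (fun _ => 0)), Lim_seq_const; [reflexivity|].
  intros n. rewrite (sigma_prefix_ext k sigma _ (v_winf k [] weps)) by auto.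
  assert (Hempty : sigma_prefix k sigma (v_winf k [] weps) n = []).
  { induction n as [|n IH]; [reflexivity|].
    rewrite sigma_prefix_S, IH, (v_winf_block [] 0); [rewrite heps|reflexivity|lia]. reflexivity. }
  rewrite Hempty. reflexivity.
Qed.

Lemma f_sigma_range (x : R) : 0 <= F x <= 1.
Proof.
  destruct (Req_dec x 0) as [->|Hx].
  - unfold f_sigma. destruct excluded_middle_informative as [_|H]; [lra|]. exfalso; apply H; auto.
  - rewrite f_sigma_eq by auto. pose proof (sigma_val_bounds k sigma (tilde x) 0) as Hb. simpl in Hb. lra.
Qed.

Lemma image_unbounded_or_erased (u : nat -> bool) :
  (forall M, exists n, (M <= length (sigma_prefix k sigma u n))%nat) \/
  (exists N, forall n, (N <= n)%nat -> block k u n = weps).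
Proof.
  destruct (classic (exists N, forall n, (N <= n)%nat -> block k u n = weps)) as [H|H]; [right; auto|left].
  assert (H' : forall N, exists n, (N <= n)%nat /\ block k u n <> weps).
  { intros N. apply NNPP. intro C. apply H. exists N. intros n Hn. apply NNPP. intro C2. apply C. eauto. }
  induction M as [|M [n Hn]]; [exists O; lia|].
  destruct (H' n) as [n' [Hn' Hb]]. exists (S n').
  rewrite sigma_prefix_S, length_app.
  destruct (sigma_prefix_add k sigma u n (n' - n)) as [r Hr].
  replace (n + (n' - n))%nat with n' in Hr by lia. rewrite Hr, length_app.
  destruct (sigma (block k u n')) eqn:E; [exfalso; apply Hb, huniq; auto; apply block_length|].
  simpl; lia.
Qed.

Lemma sigma_val_approx (u : nat -> bool) (eps : R) : 0 < eps ->
  exists n, sigma_val k sigma u <= fval (sigma_prefix k sigma u n) + eps.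
Proof.
  intros He. destruct (image_unbounded_or_erased u) as [H|[N H]].
  - destruct (inv_pow2_small eps He) as [M HM]. destruct (H M) as [n Hn]. exists n.
    pose proof (sigma_val_bounds k sigma u n). specialize (HM _ Hn). lra.
  - exists N. assert (Hconst : forall j, sigma_prefix k sigma u (N + j) = sigma_prefix k sigma u N).
    { induction j as [|j IH]; [rewrite Nat.add_0_r; auto|].
      rewrite Nat.add_succ_r, sigma_prefix_S, IH, H, heps, app_nil_r by lia. reflexivity. }
    assert (Rbar_le (sigma_val k sigma u) (fval (sigma_prefix k sigma u N))) as C; [|simpl in C; lra].
    apply (is_lim_seq_le_loc (fun n => fval (sigma_prefix k sigma u n))
      (fun _ => fval (sigma_prefix k sigma u N))); [|apply sigma_val_lim|apply is_lim_seq_const].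
    exists N. intros m Hm. replace m with (N + (m - N))%nat by lia. rewrite Hconst. lra.
Qed.

Lemma prefix_of_dint (x y : R) (n : nat) : 0 < x <= 1 -> 0 < y <= 1 ->
  dint (n * k) y = dint (n * k) x -> sigma_prefix k sigma (tilde y) n = sigma_prefix k sigma (tilde x) n.
Proof.
  intros Hx Hy E. apply sigma_prefix_ext. intros i Hi. rewrite !tilde_digit by auto.
  apply (dint_agree y x (n * k)); auto.
Qed.

Lemma f_sigma_lower (x : R) (eps : R) : 0 < x <= 1 -> 0 < eps ->
  exists m, forall y, 0 < y <= 1 -> dint m y = dint m x -> F x - eps <= F y.
Proof.
  intros Hx He. destruct (sigma_val_approx (tilde x) eps He) as [n Hn].
  exists (n * k)%nat. intros y Hy E. rewrite !f_sigma_eq by lra.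
  pose proof (sigma_val_bounds k sigma (tilde y) n) as Hy'.
  rewrite (prefix_of_dint x y n) in Hy' by auto. lra.
Qed.

Lemma f_sigma_close (x : R) (eps : R) : 0 < x <= 1 ->
  (forall M, exists n, (M <= length (sigma_prefix k sigma (tilde x) n))%nat) -> 0 < eps ->
  exists m, forall y, 0 < y <= 1 -> dint m y = dint m x -> Rabs (F y - F x) < eps.
Proof.
  intros Hx HM He. destruct (inv_pow2_small eps He) as [M HM']. destruct (HM M) as [n Hn].
  exists (n * k)%nat. intros y Hy E. rewrite !f_sigma_eq by lra.
  pose proof (sigma_val_bounds k sigma (tilde y) n) as Hy'.
  pose proof (sigma_val_bounds k sigma (tilde x) n).
  rewrite (prefix_of_dint x y n) in Hy' by auto. specialize (HM' _ Hn).
  apply Rabs_def1; lra.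
Qed.

Lemma f_sigma_lsc (x : R) : 0 < x <= 1 -> (x = 1 \/ ~ dyadic x) -> forall eps, 0 < eps ->
  exists d, 0 < d /\ forall y, inI y -> Rabs (y - x) < d -> F x - eps <= F y.
Proof.
  intros Hx Hn eps He. destruct (f_sigma_lower x eps Hx He) as [m Hm].
  destruct (dint_nbhd x m Hx Hn) as [d [Hd H]]. exists d. split; auto.
  intros y Hy Hyx. destruct (H y Hy Hyx). auto.
Qed.

Lemma f_sigma_continuous (x : R) : 0 < x <= 1 -> (x = 1 \/ ~ dyadic x) ->
  (forall M, exists n, (M <= length (sigma_prefix k sigma (tilde x) n))%nat) ->
  continuous_at_in_I F x.
Proof.
  intros Hx Hn HM eps He. destruct (f_sigma_close x eps Hx HM He) as [m Hm].
  destruct (dint_nbhd x m Hx Hn) as [d [Hd H]]. exists d. split; auto.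
  intros y Hy Hyx. destruct (H y Hy Hyx). auto.
Qed.

Lemma f_sigma_left_continuous (x : R) : 0 < x <= 1 ->
  (forall M, exists n, (M <= length (sigma_prefix k sigma (tilde x) n))%nat) ->
  left_continuous_at_in_I F x.
Proof.
  intros Hx HM eps He. destruct (f_sigma_close x eps Hx HM He) as [m Hm].
  destruct (dint_left_nbhd x m Hx) as [d [Hd H]]. exists d. split; auto.
  intros y Hy Hyx. destruct (H y Hyx). auto.
Qed.

Hypothesis hne : weps <> repeat true k.

(* A dyadic point of (0,1] has expansion ending in 1^oo, which is not
   erased because w_eps <> 1^k. *)
Lemma dyadic_image_unbounded (x : R) (a L : nat) : 0 < x <= 1 -> x = INR a / 2 ^ L ->
  forall M, exists n, (M <= length (sigma_prefix k sigma (tilde x) n))%nat.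
Proof.
  intros Hx Ex. destruct (image_unbounded_or_erased (tilde x)) as [H|[N H]]; auto.
  exfalso. apply hne. rewrite <- (H (N + L)%nat) by lia.
  unfold block. rewrite (map_ext_in _ (fun _ => true)); [rewrite map_const, length_seq; reflexivity|].
  intros j Hj. rewrite tilde_digit by auto. apply (digit_dyadic x a L); [lra|auto|nia].
Qed.

End Substitution.

Lemma eq_of_close (x q : R) : (forall j, Rabs (x - q) <= / 2 ^ j) -> x = q.
Proof.
  intros H. apply NNPP. intro Hne. assert (Hpos : 0 < Rabs (x - q)) by (apply Rabs_pos_lt; lra).
  destruct (inv_pow2_small _ Hpos) as [j Hj]. specialize (H j). specialize (Hj j (le_n _)). lra.
Qed.

Lemma int_multiple_sep (t M : R) (z : Z) : 0 < M -> t * M = IZR z -> t = 0 \/ / M <= Rabs t.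
Proof.
  intros HM E. destruct (Z.eq_dec z 0) as [->|Hz].
  - left. apply Rmult_integral in E. destruct E; lra.
  - right. assert (H1 : 1 <= Rabs (IZR z)).
    { rewrite <- abs_IZR. apply IZR_le. lia. }
    rewrite <- E, Rabs_mult, (Rabs_right M) in H1 by lra.
    apply (Rmult_le_reg_r M); auto. rewrite Rinv_l; lra.
Qed.

(* The value of the eventually periodic word v w^oo (w of length k). *)
Definition periodic_value (k : nat) (w v : list bool) : R :=
  (IZR (binZ v) * (2 ^ k - 1) + IZR (binZ w)) / ((2 ^ k - 1) * 2 ^ length v).

Lemma pow2_k_large (k : nat) : (2 <= k)%nat -> 4 <= 2 ^ k.
Proof. intros hk. replace 4 with (2 ^ 2) by (simpl; ring). apply Rle_pow; lra || lia. Qed.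

Section PeriodicValues.

Variables (k : nat) (weps : list bool).
Hypothesis hk : (2 <= k)%nat.
Hypothesis hlen : length weps = k.

Lemma binZ_weps_bounds : 0 <= IZR (binZ weps) <= 2 ^ k - 1.
Proof.
  pose proof (binZ_bounds weps) as Hb. rewrite hlen in Hb. rewrite <- pw2_IZR.
  split; [apply IZR_le; lia|]. rewrite <- minus_IZR. apply IZR_le. lia.
Qed.

Lemma periodic_value_range (v : list bool) : inI (periodic_value k weps v).
Proof.
  unfold periodic_value, inI. pose proof (binZ_bounds v) as Hb. pose proof binZ_weps_bounds.
  pose proof (pow2_k_large k hk). pose proof (pow2_pos (length v)).
  assert (HB1 : 0 <= IZR (binZ v)) by (apply IZR_le; lia).
  assert (HB2 : IZR (binZ v) <= 2 ^ length v - 1)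
    by (rewrite <- pw2_IZR, <- minus_IZR; apply IZR_le; lia).
  assert (Hd : 0 < (2 ^ k - 1) * 2 ^ length v) by (apply Rmult_lt_0_compat; lra).
  split.
  - apply Rmult_le_pos; [nra|left; apply Rinv_0_lt_compat; lra].
  - apply (Rmult_le_reg_l ((2 ^ k - 1) * 2 ^ length v)); auto.
    unfold Rdiv. rewrite Rmult_comm, Rmult_assoc, Rinv_l by lra. nra.
Qed.

Lemma periodic_value_rational (v : list bool) : exists q : Q, periodic_value k weps v = Q2R q.
Proof.
  pose proof (pw2_pos (length v)). assert (Hk : (4 <= pw2 k)%Z).
  { apply le_IZR. rewrite pw2_IZR. apply pow2_k_large, hk. }
  exists (Qmake (binZ v * (pw2 k - 1) + binZ weps) (Z.to_pos ((pw2 k - 1) * pw2 (length v)))).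
  unfold Q2R. cbn [Qnum Qden]. rewrite Z2Pos.id by nia.
  unfold periodic_value. rewrite plus_IZR, !mult_IZR, minus_IZR, !pw2_IZR. reflexivity.
Qed.

Lemma periodic_value_sep (v : list bool) (a L : nat) :
  periodic_value k weps v = INR a / 2 ^ L \/
  / ((2 ^ k - 1) * 2 ^ length v * 2 ^ L) <= Rabs (periodic_value k weps v - INR a / 2 ^ L).
Proof.
  pose proof (pow2_k_large k hk). pose proof (pow2_pos (length v)). pose proof (pow2_pos L).
  assert (HM : 0 < (2 ^ k - 1) * 2 ^ length v * 2 ^ L)
    by (apply Rmult_lt_0_compat; [apply Rmult_lt_0_compat|]; lra).
  set (z := ((binZ v * (pw2 k - 1) + binZ weps) * pw2 L
              - Z.of_nat a * (pw2 k - 1) * pw2 (length v))%Z).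
  assert (E : (periodic_value k weps v - INR a / 2 ^ L) * ((2 ^ k - 1) * 2 ^ length v * 2 ^ L) = IZR z).
  { unfold z, periodic_value. rewrite minus_IZR, !mult_IZR, plus_IZR, !mult_IZR, minus_IZR, !pw2_IZR,
      <- INR_IZR_INZ. simpl IZR. field. split; lra. }
  destruct (int_multiple_sep _ _ z HM E) as [E0|Hsep]; [left; lra|right; exact Hsep].
Qed.

Lemma block_digits (x : R) (n : nat) : 0 < x <= 1 ->
  map (digit x) (seq (n * k) k) = block k (tilde x) n.
Proof.
  intros Hx. unfold block. apply nth_ext with false false; rewrite ?length_map, ?length_seq; auto.
  intros j Hj. rewrite (nth_indep _ false (digit x 0)), (nth_indep _ false (tilde x (n * k + 0)))
    by (rewrite length_map, length_seq; auto).
  rewrite (map_nth (digit x)), (map_nth (fun j => tilde x (n * k + j))), !seq_nth by auto.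
  rewrite tilde_digit; auto.
Qed.

Section EventuallyErased.

Variables (x : R) (N : nat).
Hypothesis hx : 0 < x <= 1.
Hypothesis hN : forall n, (N <= n)%nat -> block k (tilde x) n = weps.

Let v := map (tilde x) (seq 0 (N * k)).

Lemma prefix_length : length v = (N * k)%nat.
Proof. unfold v. rewrite length_map, length_seq. reflexivity. Qed.

Lemma dint_prefix : dint (N * k) x = binZ v.
Proof.
  replace (N * k)%nat with (0 + N * k)%nat at 1 by lia. rewrite dint_add, dint_0 by auto.
  unfold v. rewrite (map_ext_in (tilde x) (digit x)) by (intros; apply tilde_digit; auto). lia.
Qed.

(* Past block N each block appends the digits of w_eps, so the level-(n k)
   indices follow an affine recursion with closed form below. *)
Lemma dint_periodic (j : nat) :
  IZR (dint ((N + j) * k) x) * (2 ^ k - 1) + IZR (binZ weps) =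
  (2 ^ k) ^ j * (IZR (binZ v) * (2 ^ k - 1) + IZR (binZ weps)).
Proof.
  induction j as [|j IH]; [rewrite Nat.add_0_r, dint_prefix; simpl; ring|].
  replace ((N + S j) * k)%nat with ((N + j) * k + k)%nat by lia.
  rewrite dint_add, block_digits, hN by (auto; lia).
  rewrite plus_IZR, mult_IZR, pw2_IZR. simpl pow. rewrite Rmult_assoc, <- IH. ring.
Qed.

(* Hence 2^((N+j)k) |x - periodic value| <= 1 for all j, so x equals it. *)
Lemma value_eventually_periodic : x = periodic_value k weps v.
Proof.
  apply eq_of_close. intros j.
  pose proof (pow2_k_large k hk) as HK. pose proof binZ_weps_bounds as Hc.
  set (T := 2 ^ ((N + j) * k)). assert (HT : 0 < T) by apply pow2_pos.
  assert (HTj : 2 ^ j <= T) by (apply Rle_pow; lra || nia).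
  assert (HTq : T * periodic_value k weps v =
    IZR (dint ((N + j) * k) x) + IZR (binZ weps) / (2 ^ k - 1)).
  { assert (ET : T = 2 ^ (N * k) * (2 ^ k) ^ j)
      by (unfold T; rewrite <- pow_mult, <- pow_add; f_equal; lia).
    replace (IZR (dint ((N + j) * k) x)) with
      (((2 ^ k) ^ j * (IZR (binZ v) * (2 ^ k - 1) + IZR (binZ weps)) - IZR (binZ weps)) / (2 ^ k - 1))
      by (rewrite <- dint_periodic; field; lra).
    rewrite ET. unfold periodic_value. rewrite prefix_length.
    field. split; [lra|apply pow_nonzero; lra]. }
  destruct (dint_spec ((N + j) * k) x) as [A1 A2]. fold T in A1, A2.
  assert (0 <= IZR (binZ weps) / (2 ^ k - 1) <= 1).
  { split; [apply Rmult_le_pos; [lra|left; apply Rinv_0_lt_compat; lra]|].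
    apply (Rmult_le_reg_r (2 ^ k - 1)); [lra|]. unfold Rdiv. rewrite Rmult_assoc, Rinv_l; lra. }
  assert (Habs : Rabs (x - periodic_value k weps v) * T <= 1).
  { rewrite <- (Rabs_right T), <- Rabs_mult by lra. apply Rabs_le. nra. }
  apply Rle_trans with (/ T); [|apply Rinv_le_contravar; [apply pow2_pos|exact HTj]].
  apply (Rmult_le_reg_r T); auto. rewrite Rinv_l; lra.
Qed.

Lemma tilde_eventually_periodic : forall i, tilde x i = v_winf k v weps i.
Proof.
  intros i. unfold v_winf. rewrite prefix_length. destruct (Nat.ltb i (N * k)) eqn:E.
  - apply Nat.ltb_lt in E. unfold v.
    rewrite (nth_indep _ false (tilde x 0%nat)) by (rewrite length_map, length_seq; auto).
    rewrite map_nth, seq_nth by auto. reflexivity.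
  - apply Nat.ltb_ge in E.
    pose proof (Nat.div_mod_eq i k) as Ei. pose proof (Nat.mod_upper_bound i k ltac:(lia)).
    assert (Hq : (N <= i / k)%nat) by (apply Nat.div_le_lower_bound; lia).
    replace (i - N * k)%nat with (i mod k + (i / k - N) * k)%nat by nia.
    rewrite Nat.Div0.mod_add, Nat.Div0.mod_mod by lia.
    rewrite <- (hN (i / k)), block_nth by auto. f_equal. lia.
Qed.

End EventuallyErased.

End PeriodicValues.

Fixpoint words (l : nat) : list (list bool) :=
  match l with O => [[]] | S l => flat_map (fun w => [false :: w; true :: w]) (words l) end.

Lemma in_words (v : list bool) : In v (words (length v)).
Proof.
  induction v as [|b v IH]; simpl; auto. apply in_flat_map. exists v. split; auto. destruct b; simpl; auto.
Qed.

Lemma words_length (l : nat) (v : list bool) : In v (words l) -> length v = l.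
Proof.
  revert v. induction l as [|l IH]; simpl; intros v H; [destruct H as [<-|[]]; auto|].
  apply in_flat_map in H. destruct H as [w [Hw Hv]].
  destruct Hv as [<-|[<-|[]]]; simpl; f_equal; auto.
Qed.

Lemma countable_of_rational (A : R -> Prop) : (forall x, A x -> exists q : Q, x = Q2R q) -> countable_set A.
Proof.
  intros H.
  exists (fun n => let (a, r) := Cantor.of_nat n in let (b, c) := Cantor.of_nat r in
                   Q2R (Qmake (Z.of_nat a - Z.of_nat b) (Pos.of_succ_nat c))).
  intros x Hx. destruct (H x Hx) as [[z p] ->].
  exists (Cantor.to_nat (Z.to_nat z, Cantor.to_nat (Z.to_nat (- z), Nat.pred (Pos.to_nat p)))).
  rewrite !Cantor.cancel_of_to.
  replace (Z.of_nat (Z.to_nat z) - Z.of_nat (Z.to_nat (- z)))%Z with z by lia.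
  rewrite (SuccNat2Pos.inv _ p); [reflexivity|]. pose proof (Pos2Nat.is_pos p). lia.
Qed.

Lemma dyadic_rational (x : R) : dyadic x -> exists q : Q, x = Q2R q.
Proof.
  intros [_ [m [n E]]]. pose proof (pw2_pos n).
  exists (Qmake (Z.of_nat m) (Z.to_pos (pw2 n))). unfold Q2R. cbn [Qnum Qden].
  rewrite Z2Pos.id, E, INR_IZR_INZ, pw2_IZR by lia. reflexivity.
Qed.

Lemma dyadic_0 : dyadic 0.
Proof. split; [unfold inI; lra|]. exists O, O. simpl. field. Qed.

Lemma dyadic_1 : dyadic 1.
Proof. split; [unfold inI; lra|]. exists 1%nat, O. simpl. field. Qed.

Lemma nondyadic_interior (x : R) : inI x -> ~ dyadic x -> 0 < x < 1.
Proof.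
  intros HI Hnd. unfold inI in HI.
  destruct (Req_dec x 0) as [->|H0]; [contradiction (Hnd dyadic_0)|].
  destruct (Req_dec x 1) as [->|H1]; [contradiction (Hnd dyadic_1)|]. lra.
Qed.

Section Lemma3p2.

Variables (k : nat) (sigma : list bool -> list bool) (weps : list bool).
Hypothesis hk : (2 <= k)%nat.
Hypothesis hlen : length weps = k.
Hypothesis heps : sigma weps = [].
Hypothesis huniq : forall w : list bool, length w = k -> sigma w = [] -> w = weps.
Hypothesis hne : weps <> repeat true k.

Local Notation F := (f_sigma k sigma weps).

Lemma erased_in_E (x : R) (N : nat) : 0 < x <= 1 ->
  (forall n, (N <= n)%nat -> block k (tilde x) n = weps) -> E_sigma k weps x.
Proof.
  intros Hx H. set (v := map (tilde x) (seq 0 (N * k))).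
  split; [unfold inI; lra|split].
  - destruct (periodic_value_rational k weps hk hlen v) as [q Hq]. exists q.
    rewrite <- Hq. apply value_eventually_periodic; auto.
  - exists v, N. split; [apply prefix_length|].
    unfold ival. rewrite (Series_ext _ (fun i => b2R (tilde x i) / 2 ^ S i))
      by (intros n; rewrite (tilde_eventually_periodic k weps hk hlen x N H); reflexivity).
    symmetry. apply is_series_unique, (tilde_spec x Hx).
Qed.

(* Part 1: continuity on C^sigma.  There x is not dyadic (or x = 1) and x~
   cannot end in w_eps^oo, so its block images grow without bound. *)
Theorem f_sigma_continuous_on_C (x : R) : C_sigma k weps x -> continuous_at_in_I F x.
Proof.
  intros [HI [Hd0 HE]].
  assert (Hx0 : x <> 0) by (intros ->; apply Hd0; split; [apply dyadic_0|lra]).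
  assert (Hx : 0 < x <= 1) by (unfold inI in HI; lra).
  assert (Hn : x = 1 \/ ~ dyadic x).
  { destruct (Req_dec x 1); auto. right. intro D. apply Hd0. split; auto. }
  destruct (image_unbounded_or_erased k sigma weps hk hlen huniq (tilde x)) as [HM|[N HN]].
  - apply f_sigma_continuous; auto.
  - exfalso. apply HE, (erased_in_E x N Hx HN).
Qed.

(* Part 2: I \ C^sigma consists of rationals. *)
Theorem exceptional_countable : countable_set (fun x => inI x /\ ~ C_sigma k weps x).
Proof.
  apply countable_of_rational. intros x [HI HC].
  destruct (classic (dyadic0 x)) as [[D _]|ND]; [apply dyadic_rational, D|].
  destruct (classic (E_sigma k weps x)) as [[_ [Hq _]]|NE]; [exact Hq|].
  exfalso; apply HC. split; [exact HI|split; assumption].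
Qed.

Theorem f_sigma_left_continuous_dyadic (x : R) : dyadic x -> x <> 0 -> left_continuous_at_in_I F x.
Proof.
  intros [HI [a [L E]]] Hx0. assert (Hx : 0 < x <= 1) by (unfold inI in HI; lra).
  apply f_sigma_left_continuous; auto.
  apply (dyadic_image_unbounded k sigma weps hk hlen huniq hne x a L Hx E).
Qed.

Definition apexes (n : nat) : list R :=
  map (periodic_value k weps) (flat_map (fun m => words (m * k)) (seq 0 (S n))).

Definition slope (n : nat) : R := 2 ^ (n * k + n + k).

Lemma apexes_sep (n a L : nat) (c : R) : (L <= n)%nat -> In c (apexes n) -> c <> INR a / 2 ^ L ->
  1 <= slope n * Rabs (c - INR a / 2 ^ L).
Proof.
  intros HL Hc Hne. apply in_map_iff in Hc. destruct Hc as [v [<- Hv]].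
  apply in_flat_map in Hv. destruct Hv as [m [Hm%in_seq Hv%words_length]].
  destruct (periodic_value_sep k weps hk v a L) as [E|Hsep]; [contradiction|].
  pose proof (pow2_pos (length v)). pose proof (pow2_pos L). pose proof (pow2_pos k).
  pose proof (pow2_k_large k hk).
  assert (Hd : 0 < (2 ^ k - 1) * 2 ^ length v * 2 ^ L)
    by (apply Rmult_lt_0_compat; [apply Rmult_lt_0_compat|]; lra).
  assert (Hle : (2 ^ k - 1) * 2 ^ length v * 2 ^ L <= slope n).
  { unfold slope. rewrite !pow_add.
    assert (2 ^ length v <= 2 ^ (n * k)) by (apply Rle_pow; lra || nia).
    assert (2 ^ L <= 2 ^ n) by (apply Rle_pow; lra || lia).
    replace (2 ^ (n * k) * 2 ^ n * 2 ^ k) with (2 ^ k * 2 ^ (n * k) * 2 ^ n) by ring.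
    apply Rmult_le_compat; [nra|lra|apply Rmult_le_compat; lra|lra]. }
  apply Rle_trans with (slope n * / ((2 ^ k - 1) * 2 ^ length v * 2 ^ L)).
  - apply (Rmult_le_reg_r ((2 ^ k - 1) * 2 ^ length v * 2 ^ L)); auto.
    replace (slope n * / ((2 ^ k - 1) * 2 ^ length v * 2 ^ L) * ((2 ^ k - 1) * 2 ^ length v * 2 ^ L))
      with (slope n) by (field; lra). lra.
  - apply Rmult_le_compat_l; [lra|exact Hsep].
Qed.

Lemma erased_in_apexes (x : R) (N n : nat) : 0 < x <= 1 ->
  (forall m, (N <= m)%nat -> block k (tilde x) m = weps) -> (N <= n)%nat -> In x (apexes n).
Proof.
  intros Hx HN Hn. apply in_map_iff.
  exists (map (tilde x) (seq 0 (N * k))). split; [symmetry; apply value_eventually_periodic; auto|].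
  apply in_flat_map. exists N. split; [apply in_seq; lia|].
  pose proof (in_words (map (tilde x) (seq 0 (N * k)))) as Hw.
  rewrite prefix_length in Hw. exact Hw.
Qed.

Theorem f_sigma_baire_1 : baire_class_1_on_I F.
Proof.
  apply (baire_criterion F apexes slope).
  - intros x _. apply (f_sigma_range k sigma weps hk hlen heps).
  - intros n c Hc. apply in_map_iff in Hc. destruct Hc as [v [<- _]].
    apply (periodic_value_range k weps hk hlen).
  - intros n. apply Rle_pow; lra || lia.
  - apply apexes_sep.
  - intros x HI Hnd. pose proof (nondyadic_interior x HI Hnd).
    apply f_sigma_lsc; auto; lra.
  - intros x HI Hnd. pose proof (nondyadic_interior x HI Hnd) as Hx01.
    assert (Hx : 0 < x <= 1) by lra.
    destruct (image_unbounded_or_erased k sigma weps hk hlen huniq (tilde x)) as [HM|[N HN]].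
    + left. apply f_sigma_continuous; auto.
    + right. exists N. intros n Hn. apply (erased_in_apexes x N n); auto.
Qed.

End Lemma3p2.

Theorem lemma3p2 (k : nat) (sigma : list bool -> list bool) (weps : list bool)
  (hk : (2 <= k)%nat)
  (hlen : length weps = k)
  (heps : sigma weps = [])
  (huniq : forall w : list bool, length w = k -> sigma w = [] -> w = weps)
  (hne : weps <> repeat true k) :
  (forall x : R, C_sigma k weps x -> continuous_at_in_I (f_sigma k sigma weps) x)
  /\ countable_set (fun x => inI x /\ ~ C_sigma k weps x)
  /\ baire_class_1_on_I (f_sigma k sigma weps)
  /\ (forall x : R, dyadic x -> x <> 0 ->
        left_continuous_at_in_I (f_sigma k sigma weps) x).
Proof.
  split; [|split; [|split]].
  - apply f_sigma_continuous_on_C; assumption.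
  - apply exceptional_countable; assumption.
  - apply f_sigma_baire_1; assumption.
  - apply f_sigma_left_continuous_dyadic; assumption.
Qed.
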